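(* In the setting below, let $a\in\mathcal{B}(x)\setminus\mathcal{B}(y)$, $b\in\mathcal{B}(y)$, with $x\neq y$ and $[x,y]=(x_0,\dots,x_m)$. (i) If $\gamma\in\mathcal{P}h(a,b;\mathcal{B}(y)^\complement)$ and $\gamma=\gamma_1\ast\cdots\ast\gamma_l\ast\gamma_f$ is its decomposition along $[x,y]$ with crossing vertices $(c_0,\dots,c_l)$, then $c_l=b$ and $\gamma_f=(b)$. (ii) For every $(c_0,\dots,c_l)\in\Xi_{[x,y]}$ with crossing indices $(i_1,\dots,i_l)$, the map $(\gamma_1,\dots,\gamma_l)\mapsto\gamma_1\ast\cdots\ast\gamma_l$ is a bijection from $\prod_{s=1}^l\mathcal{P}h(c_{s-1},c_s;\mathcal{B}(x_{i_s})^\complement)$ onto the set of $p$-admissible paths in $\mathcal{P}h(c_0,c_l;\mathcal{B}(x_m)^\complement)$ whose crossing vertices along $[x,y]$ are $(c_0,\dots,c_l)$.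
   Context: Setting: $X$ a tree of bounded valence, $p$ a transition kernel on $X_0$ with $(X_0,p)$ irreducible, $k\ge0$ with $d(u,v)>k\Rightarrow p(u,v)=0$. A $p$-admissible path is $(\omega_0,\dots,\omega_n)$ with $p(\omega_{i-1},\omega_i)>0$; $\mathcal{P}h(a,b;\Omega)$ is the set of those from $a$ to $b$ with intermediate vertices in $\Omega$; $\ast$ is concatenation. $\mathcal{B}(w)=\{v:d(w,v)\le k\}$, $\partial\mathcal{B}(w)=\{v:d(w,v)=k+1\}$, $\Xi_w=\{(a,b)\in\partial\mathcal{B}(w)\times\mathcal{B}(w):\mathcal{P}h(a,b;\mathcal{B}(w)^\complement)\ne\emptyset\}$. $\Xi_{[x,y]}$: tuples $(c_0,\dots,c_l)$, $0<l\le m$, with integers $0<i_1<\dots<i_l\le m$ (crossing indices, $i_s=1+\max\{i:c_{s-1}\in\mathcal{B}(x_i)\}$) such that $c_0\in\mathcal{B}(x)\cap\partial\mathcal{B}(x_{i_1})$, $c_j\in\mathcal{B}(x_{i_j})\cap\partial\mathcal{B}(x_{i_{j+1}})$, $c_l\in\mathcal{B}(x_{i_l})\cap\mathcal{B}(y)$, $(c_{j-1},c_j)\in\Xi_{x_{i_j}}$. The decomposition of a $p$-admissible path $\gamma$ from $a'\in\mathcal{B}(x)\setminus\mathcal{B}(y)$ to $b'\in\mathcal{B}(y)$ along $[x,y]$ is the unique writing $\gamma=\gamma_1\ast\cdots\ast\gamma_l\ast\gamma_f$ with $(c_0,\dots,c_l)\in\Xi_{[x,y]}$ (the crossing vertices),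 $\gamma_s\in\mathcal{P}h(c_{s-1},c_s;\mathcal{B}(x_{i_s})^\complement)$ and $\gamma_f$ a $p$-admissible path from $c_l$ to $b'$; concretely $c_s$ is the first vertex of $\gamma$ lying in $\mathcal{B}(x_{i_s})$. *)

From Stdlib Require Import Reals List Arith Lia.
Import ListNotations.
Set Implicit Arguments.

Inductive walk (V : Type) (adj : V -> V -> Prop) : V -> V -> nat -> Prop :=
| walk0 u : walk adj u u 0
| walkS u w v n : adj u w -> walk adj w v n -> walk adj u v (S n).

Fixpoint chain (V : Type) (r : V -> V -> Prop) (l : list V) : Prop :=
  match l with
  | a :: ((b :: _) as t) => r a b /\ chain r t
  | _ => True
  end.

Definition closed_walk (V : Type) (adj : V -> V -> Prop) (c : list V) : Prop :=
  match c with
  | [] => False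
  | v0 :: _ => chain adj c /\ adj (last c v0) v0
  end.

Definition is_tree (V : Type) (adj : V -> V -> Prop) : Prop :=
  (forall u v, adj u v -> adj v u) /\
  (forall u, ~ adj u u) /\
  (forall u v, exists n, walk adj u v n) /\
  (forall c : list V, NoDup c -> (3 <= length c)%nat -> ~ closed_walk adj c).

Definition bounded_valence (V : Type) (adj : V -> V -> Prop) : Prop :=
  exists M : nat, forall v, exists L : list V,
    (length L <= M)%nat /\ forall w, adj v w -> In w L.

Definition is_graph_dist (V : Type) (adj : V -> V -> Prop) (d : V -> V -> nat) : Prop :=
  forall u v, walk adj u v (d u v) /\ forall n, walk adj u v n -> (d u v <= n)%nat.

(* [x,y] = xs = (x_0,...,x_m), m = d(x,y) *)
Definition geodesic (V : Type) (adj : V -> V -> Prop) (d : V -> V -> nat)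
  (x y : V) (xs : list V) : Prop :=
  length xs = S (d x y) /\ nth 0 xs x = x /\ last xs x = y /\ chain adj xs.

Definition sumR (l : list R) : R := fold_right Rplus 0%R l.

Definition transition_kernel (V : Type) (p : V -> V -> R) : Prop :=
  (forall u v, (0 <= p u v)%R) /\
  forall u, exists L : list V, NoDup L /\ (forall v, p u v <> 0%R -> In v L) /\
    sumR (map (p u) L) = 1%R.

Definition finite_range (V : Type) (d : V -> V -> nat) (p : V -> V -> R) (k : nat) : Prop :=
  forall u v, (k < d u v)%nat -> p u v = 0%R.

Definition padm (V : Type) (p : V -> V -> R) (g : list V) : Prop :=
  g <> [] /\ chain (fun u v => (0 < p u v)%R) g.

Definition Ph (V : Type) (p : V -> V -> R) (a b : V) (Om : V -> Prop) (g : list V) : Prop :=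
  chain (fun u v => (0 < p u v)%R) g /\
  ((g = [a] /\ a = b) \/ exists mid, g = a :: mid ++ [b] /\ Forall Om mid).

Definition irreducible (V : Type) (p : V -> V -> R) : Prop :=
  forall u v, exists g, Ph p u v (fun _ => True) g.

(* concatenation g1 * g2 * ... (paths glued at matching endpoints) *)
Fixpoint cat_paths (V : Type) (gs : list (list V)) : list V :=
  match gs with
  | [] => []
  | [g] => g
  | g :: gs' => g ++ tl (cat_paths gs')
  end.

Definition ball (V : Type) (d : V -> V -> nat) (k : nat) (w v : V) : Prop := (d w v <= k)%nat.
Definition sphere (V : Type) (d : V -> V -> nat) (k : nat) (w v : V) : Prop := d w v = S k.

Definition XiW (V : Type) (p : V -> V -> R) (d : V -> V -> nat) (k : nat) (w a b : V) : Prop :=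
  sphere d k w a /\ ball d k w b /\
  exists g, Ph p a b (fun v => ~ ball d k w v) g.

Definition cross_index (V : Type) (d : V -> V -> nat) (k : nat) (xs : list V) (c : V) (i : nat) : Prop :=
  exists j, i = S j /\ (j < length xs)%nat /\ ball d k (nth j xs c) c /\
    forall j', (j' < length xs)%nat -> ball d k (nth j' xs c) c -> (j' <= j)%nat.

(* (c_0,...,c_l) in Xi_[x,y] with crossing indices (i_1,...,i_l);
   cs = [c_0;...;c_l], is = [i_1;...;i_l], xs = [x_0;...;x_m], x = x_0. *)
Definition Xi_path (V : Type) (p : V -> V -> R) (d : V -> V -> nat) (k : nat)
  (x : V) (xs : list V) (cs : list V) (is : list nat) : Prop :=
  let m := pred (length xs) in
  let l := length is in
  let c := fun s => nth s cs x in
  let i := fun s => nth s is 0%nat in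
  let xv := fun j => nth j xs x in
  (0 < l)%nat /\ (l <= m)%nat /\ length cs = S l /\
  (0 < i 0)%nat /\ (i (pred l) <= m)%nat /\
  (forall s, (S s < l)%nat -> (i s < i (S s))%nat) /\
  ball d k x (c 0%nat) /\ ball d k (last xs x) (c l) /\
  forall s, (s < l)%nat ->
    cross_index d k xs (c s) (i s) /\
    sphere d k (xv (i s)) (c s) /\
    ball d k (xv (i s)) (c (S s)) /\
    XiW p d k (xv (i s)) (c s) (c (S s)).

Definition prod_Ph (V : Type) (p : V -> V -> R) (d : V -> V -> nat) (k : nat)
  (x : V) (xs : list V) (cs : list V) (is : list nat) (gs : list (list V)) : Prop :=
  length gs = length is /\
  forall s, (s < length is)%nat ->
    Ph p (nth s cs x) (nth (S s) cs x)
       (fun v => ~ ball d k (nth (nth s is 0%nat) xs x) v) (nth s gs []).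

Definition decomp (V : Type) (p : V -> V -> R) (d : V -> V -> nat) (k : nat)
  (x : V) (xs : list V) (g : list V) (cs : list V) (is : list nat)
  (gs : list (list V)) (gf : list V) : Prop :=
  Xi_path p d k x xs cs is /\
  prod_Ph p d k x xs cs is gs /\
  padm p gf /\ hd_error gf = Some (nth (length is) cs x) /\
  g = cat_paths (gs ++ [gf]).

Definition bij_onto (A B : Type) (f : A -> B) (SA : A -> Prop) (SB : B -> Prop) : Prop :=
  (forall a, SA a -> SB (f a)) /\
  (forall a a', SA a -> SA a' -> f a = f a' -> a = a') /\
  (forall b, SB b -> exists a, SA a /\ f a = b).

From Stdlib Require Import Reals List Arith Lia Classical.
Import ListNotations.
Set Implicit Arguments.
Unset Strict Implicit.

(* Write [c_s] for the crossing vertices and [x_{i_s}] for the centres of the crossed balls.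
   The vertex [c_s] lies in some ball [B(x_j)] with [j < i_s] but outside [B(x_{i_s})], so
   in the tree [x_{i_s}] separates [c_s] from the end [x_m] of the geodesic.  Admissible
   steps have length at most [k], so a path from [c_s] avoiding [B(x_{i_s})] cannot jump
   across that ball: it stays on the side of [c_s], hence outside [B(x_m)].  Thus a
   concatenation of pieces avoids [B(x_m)], and its decomposition is given by the pieces
   themselves with a trivial final part.  Conversely each piece ends at its first visit to
   [B(x_{i_s})], so the pieces are read off from the concatenation; and a path whose
   intermediate vertices avoid [B(y)] reaches [c_l], which lies in [B(y)], only at its
   end, which forces the final part to be trivial. *)

Section WalksIn.

Variables (V : Type) (adj : V -> V -> Prop).

Inductive walk_in (P : V -> Prop) : list V -> V -> V -> Prop :=
| walk_in_single a : P a -> walk_in P [a] a a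
| walk_in_cons a b c l : adj a b -> P a -> walk_in P l b c -> walk_in P (a :: l) a c.

Lemma walk_in_head P l a b : walk_in P l a b -> exists t, l = a :: t.
Proof. destruct 1; eauto. Qed.

Lemma walk_in_walk P l a b : walk_in P l a b -> walk adj a b (pred (length l)).
Proof.
  induction 1 as [a _ | a b c l Hab _ H IH]; [constructor|].
  destruct (walk_in_head H) as [t ->]. simpl in *. econstructor; eauto.
Qed.

Lemma walk_walk_in a b n : walk adj a b n ->
  exists l, walk_in (fun _ => True) l a b /\ length l = S n.
Proof.
  induction 1 as [u | u w v n Huw _ [l [Hl Hlen]]].
  - exists [u]. split; [constructor|]; auto.
  - exists (u :: l). split; [econstructor; eauto | simpl; congruence].
Qed.

Lemma walk_in_Forall P l a b : walk_in P l a b -> Forall P l.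
Proof. induction 1; auto. Qed.

Lemma walk_in_chain P l a b : walk_in P l a b -> chain adj l.
Proof.
  induction 1 as [| a b c l Hab _ H IH]; simpl; auto.
  destruct (walk_in_head H) as [t ->]. auto.
Qed.

Lemma walk_in_last P l a b : walk_in P l a b -> forall z, last l z = b.
Proof.
  induction 1 as [| a b c l _ _ H IH]; intros z; simpl; auto.
  destruct (walk_in_head H) as [t ->]. rewrite <- (IH z). reflexivity.
Qed.

Lemma walk_in_restrict P Q l a b : walk_in P l a b -> Forall Q l -> walk_in Q l a b.
Proof. induction 1; intros HQ; inversion HQ; subst; econstructor; eauto. Qed.

Lemma walk_in_app P l1 l2 a b c :
  walk_in P l1 a b -> walk_in P l2 b c -> walk_in P (l1 ++ tl l2) a c.
Proof.
  induction 1; intros H2.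
  - destruct (walk_in_head H2) as [t ->]. exact H2.
  - simpl. econstructor; eauto.
Qed.

Lemma walk_in_split P l1 w l2 a b : walk_in P (l1 ++ w :: l2) a b ->
  walk_in P (l1 ++ [w]) a w /\ walk_in P (w :: l2) w b.
Proof.
  revert a. induction l1 as [|v l1 IH]; simpl; intros a H.
  - destruct (walk_in_head H) as [t Ht]. injection Ht as -> ->.
    split; [constructor; exact (Forall_inv (walk_in_Forall H)) | exact H].
  - inversion H as [|? b0 ? ? Hab HP Hl]; subst; [destruct l1; discriminate|].
    destruct (IH _ Hl) as [H1 H2]. split; [econstructor; eauto | exact H2].
Qed.

Lemma walk_in_rev (Hsym : forall u v, adj u v -> adj v u) P l a b :
  walk_in P l a b -> walk_in P (rev l) b a.
Proof.
  induction 1 as [a Ha | a b c l Hab Ha H IH]; simpl; [constructor; auto|].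
  change (rev l ++ [a]) with (rev l ++ tl [b; a]). apply (walk_in_app IH).
  destruct (walk_in_head H) as [t ->].
  econstructor; [apply Hsym, Hab | exact (Forall_inv (walk_in_Forall H)) | constructor; exact Ha].
Qed.

Lemma walk_in_NoDup P l a b : walk_in P l a b -> exists l', walk_in P l' a b /\ NoDup l'.
Proof.
  induction 1 as [a Ha | a b c l Hab Ha H [l' [H' Hnd]]].
  - exists [a]. split; [constructor; auto | repeat constructor; auto].
  - destruct (classic (In a l')) as [Hin | Hout].
    + apply in_split in Hin as [l1 [l2 ->]].
      exists (a :: l2). split; [exact (proj2 (walk_in_split H')) |].
      exact (NoDup_app_remove_l _ _ Hnd).
    + exists (a :: l'). split; [econstructor; eauto | constructor; auto].
Qed.

End WalksIn.

Section Distance.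

Variables (V : Type) (adj : V -> V -> Prop) (d : V -> V -> nat).
Hypothesis Hd : is_graph_dist adj d.

Lemma dist_le_walk_in P l u v : walk_in adj P l u v -> d u v <= pred (length l).
Proof. intros H. exact (proj2 (Hd u v) _ (walk_in_walk H)). Qed.

Lemma dist_walk_in u v : exists l, walk_in adj (fun _ => True) l u v /\ length l = S (d u v).
Proof. exact (walk_walk_in (proj1 (Hd u v))). Qed.

Lemma dist_refl u : d u u = 0.
Proof. pose proof (proj2 (Hd u u) 0 (walk0 adj u)). lia. Qed.

Lemma dist_eq0 u v : d u v = 0 -> u = v.
Proof. intros H. pose proof (proj1 (Hd u v)) as W. rewrite H in W. inversion W; auto. Qed.

Lemma dist_adj u v : adj u v -> d u v <= 1.
Proof. intros H. apply (proj2 (Hd u v)). econstructor; eauto. constructor. Qed.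

Lemma dist_triangle u v w : d u w <= d u v + d v w.
Proof.
  destruct (dist_walk_in u v) as [l1 [H1 E1]], (dist_walk_in v w) as [l2 [H2 E2]].
  pose proof (dist_le_walk_in (walk_in_app H1 H2)) as H.
  destruct (walk_in_head H2) as [t ->]. rewrite length_app in H. simpl in *. lia.
Qed.

(* A shortest walk through [w] would be at least [d a w + d w v] long. *)
Lemma walk_in_avoiding a v w :
  d a v < d a w + d w v -> exists l, walk_in adj (fun t => t <> w) l a v.
Proof.
  intros H. destruct (dist_walk_in a v) as [l [Hl E]]. exists l.
  apply (walk_in_restrict Hl), Forall_forall. intros t Ht ->.
  apply in_split in Ht as [l1 [l2 ->]]. destruct (walk_in_split Hl) as [H1 H2].
  pose proof (dist_le_walk_in H1). pose proof (dist_le_walk_in H2).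
  rewrite !length_app in *. simpl in *. lia.
Qed.

Hypothesis Hsym : forall u v, adj u v -> adj v u.

Lemma dist_sym u v : d u v = d v u.
Proof.
  assert (Hle : forall u v, d u v <= d v u).
  { intros a b. destruct (dist_walk_in b a) as [l [Hl E]].
    pose proof (dist_le_walk_in (walk_in_rev Hsym Hl)). rewrite length_rev, E in *. simpl in *. lia. }
  pose proof (Hle u v). pose proof (Hle v u). lia.
Qed.

Lemma dist_last_step a b : 1 <= d a b -> exists q, adj b q /\ S (d a q) = d a b.
Proof.
  intros H. destruct (dist_walk_in b a) as [l [Hl E]].
  inversion Hl as [? _ | ? q ? l' Hbq _ Hq]; subst; [rewrite dist_refl in H; lia|].
  exists q. split; auto.
  pose proof (dist_le_walk_in Hq). pose proof (dist_triangle a q b).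
  pose proof (dist_adj Hbq). rewrite (dist_sym b a), (dist_sym b q), (dist_sym q a) in *.
  simpl in *. lia.
Qed.

End Distance.

Definition between (V : Type) (d : V -> V -> nat) (u w z : V) : Prop :=
  d u z = d u w + d w z.

Section Tree.

Variables (V : Type) (adj : V -> V -> Prop) (d : V -> V -> nat).
Hypothesis Hd : is_graph_dist adj d.
Hypothesis Hsym : forall u v, adj u v -> adj v u.
Hypothesis Hacyclic : forall c : list V, NoDup c -> 3 <= length c -> ~ closed_walk adj c.

(* Otherwise the neighbours of [w] towards [u] and towards [z] are joined by a
   walk through [v] avoiding [w], which closes up into a cycle through [w]. *)
Lemma between_split u w z v : between d u w z -> between d u w v \/ between d v w z.
Proof.
  unfold between. intros Huz.
  destruct (classic (d u v = d u w + d w v)) as [E1|E1]; auto.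
  destruct (classic (d v z = d v w + d w z)) as [E2|E2]; auto.
  exfalso.
  pose proof (dist_triangle Hd u w v). pose proof (dist_triangle Hd v w z).
  assert (Hwu : 1 <= d u w).
  { destruct (d u w) eqn:E; [|lia]. apply (dist_eq0 Hd) in E. subst. lia. }
  assert (Hzw : 1 <= d z w).
  { rewrite (dist_sym Hd Hsym). destruct (d w z) eqn:E; [|lia].
    apply (dist_eq0 Hd) in E. subst. lia. }
  destruct (dist_last_step Hd Hsym Hwu) as [q1 [A1 B1]].
  destruct (dist_last_step Hd Hsym Hzw) as [q2 [A2 B2]].
  rewrite (dist_sym Hd Hsym z w) in B2.
  assert (Hq : q1 <> q2).
  { intros <-. pose proof (dist_triangle Hd u q1 z). rewrite (dist_sym Hd Hsym q1 z) in *. lia. }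
  destruct (@walk_in_avoiding _ _ _ Hd q1 u w) as [L1 HL1].
  { rewrite (dist_sym Hd Hsym q1 u), (dist_sym Hd Hsym w u). lia. }
  destruct (@walk_in_avoiding _ _ _ Hd u v w) as [L2 HL2]; [lia|].
  destruct (@walk_in_avoiding _ _ _ Hd v z w) as [L3 HL3]; [lia|].
  destruct (@walk_in_avoiding _ _ _ Hd z q2 w) as [L4 HL4].
  { rewrite (dist_sym Hd Hsym z w). lia. }
  destruct (walk_in_NoDup (walk_in_app (walk_in_app (walk_in_app HL1 HL2) HL3) HL4))
    as [L [HL Hnd]].
  inversion HL as [? _ | ? q ? L' _ _ HL']; subst; [congruence|].
  destruct (walk_in_head HL') as [t ->].
  apply (@Hacyclic (w :: q1 :: q :: t)).
  - constructor; auto. intros Hin. exact (proj1 (Forall_forall _ _) (walk_in_Forall HL) w Hin eq_refl).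
  - simpl. lia.
  - split; [split; [exact A1 | exact (walk_in_chain HL)]|].
    change (last (w :: q1 :: q :: t) w) with (last (q1 :: q :: t) w).
    rewrite (walk_in_last HL). apply Hsym, A2.
Qed.

End Tree.

Lemma last_nth_pred (V : Type) (l : list V) z : last l z = nth (pred (length l)) l z.
Proof. induction l as [|a [|b l] IH]; simpl; auto. Qed.

Lemma chain_nth (V : Type) (r : V -> V -> Prop) l (z : V) j :
  chain r l -> S j < length l -> r (nth j l z) (nth (S j) l z).
Proof.
  revert j. induction l as [|a [|b l] IH]; intros j C H; simpl in H; try lia.
  destruct C as [C1 C2]. destruct j; simpl; auto. apply (IH j C2). simpl; lia.
Qed.

Section Geodesic.

Variables (V : Type) (adj : V -> V -> Prop) (d : V -> V -> nat).
Hypothesis Hd : is_graph_dist adj d.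

Lemma chain_dist_le (xs : list V) z i j :
  chain adj xs -> i <= j -> j < length xs -> d (nth i xs z) (nth j xs z) <= j - i.
Proof.
  intros C Hij Hj. induction j as [|j IH].
  - replace i with 0 by lia. rewrite (dist_refl Hd). lia.
  - destruct (Nat.eq_dec i (S j)) as [->|Hne]; [rewrite (dist_refl Hd); lia|].
    pose proof (IH ltac:(lia) ltac:(lia)).
    pose proof (dist_triangle Hd (nth i xs z) (nth j xs z) (nth (S j) xs z)).
    pose proof (dist_adj Hd (chain_nth z C Hj)). lia.
Qed.

(* Both [x_0 .. x_i] and [x_j .. x_m] are short, and [d x y = m]. *)
Lemma geodesic_dist x y xs i j : geodesic adj d x y xs -> i <= j -> j < length xs ->
  d (nth i xs x) (nth j xs x) = j - i.
Proof.
  intros [HL [H0 [Hlast C]]] Hij Hj. rewrite last_nth_pred in Hlast.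
  pose proof (chain_dist_le x C Hij Hj).
  pose proof (@chain_dist_le xs x 0 i C ltac:(lia) ltac:(lia)).
  pose proof (@chain_dist_le xs x j (pred (length xs)) C ltac:(lia) ltac:(lia)).
  pose proof (dist_triangle Hd x (nth i xs x) (nth (pred (length xs)) xs x)).
  pose proof (dist_triangle Hd (nth i xs x) (nth j xs x) (nth (pred (length xs)) xs x)).
  rewrite H0, Hlast in *. lia.
Qed.

End Geodesic.

Lemma chain_app (V : Type) (r : V -> V -> Prop) l1 b l2 :
  chain r (l1 ++ [b]) -> chain r (b :: l2) -> chain r (l1 ++ b :: l2).
Proof.
  induction l1 as [|a [|a' l1] IH]; simpl; auto.
  - intros [H1 _] H2. auto.
  - intros [H1 H3] H2. split; [exact H1 | exact (IH H3 H2)].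
Qed.

Section AdmissiblePaths.

Variables (V : Type) (p : V -> V -> R).

Lemma Ph_head a b Om (g : list V) : Ph p a b Om g -> exists t, g = a :: t.
Proof. intros [_ [[-> _] | [mid [-> _]]]]; eauto. Qed.

Lemma Ph_nonempty a b Om (g : list V) : Ph p a b Om g -> g <> [].
Proof. intros H. destruct (Ph_head H) as [t ->]. discriminate. Qed.

Lemma Ph_distinct_ends a b Om (g : list V) :
  Ph p a b Om g -> a <> b -> exists mid, g = a :: mid ++ [b].
Proof. intros [_ [[_ E] | [mid [-> _]]]] Hab; [contradiction | eauto]. Qed.

Lemma Ph_app a b c Om (g1 g2 : list V) :
  Ph p a b Om g1 -> Ph p b c Om g2 -> Om b -> Ph p a c Om (g1 ++ tl g2).
Proof.
  intros [C1 [[-> ->] | [m1 [-> F1]]]] [C2 [[-> ->] | [m2 [-> F2]]]] Hb; simpl.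
  - split; auto.
  - split; eauto.
  - rewrite app_nil_r. split; eauto.
  - split.
    + change (a :: m1 ++ [b]) with ((a :: m1) ++ [b]) in C1.
      pose proof (chain_app C1 C2) as C. simpl in C. rewrite <- app_assoc. exact C.
    + right. exists (m1 ++ b :: m2). split.
      * simpl. rewrite <- !app_assoc. reflexivity.
      * apply Forall_app. auto.
Qed.

Lemma Ph_invariant (I Om Om' : V -> Prop) a b g :
  I a -> (forall u v, I u -> (0 < p u v)%R -> Om v -> I v) -> (forall v, I v -> Om' v) ->
  Ph p a b Om g -> Ph p a b Om' g.
Proof.
  intros Ia Hstep HI [C [H | [mid [-> F]]]]; split; auto.
  right. exists mid. split; auto.
  apply (Forall_impl _ HI). clear HI. revert a Ia C.
  induction mid as [|v mid IH]; intros a Ia C; auto.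
  inversion F as [|? ? Fv Fmid]; subst. destruct C as [Cav C].
  assert (Iv : I v) by eauto. constructor; [exact Iv | exact (IH Fmid v Iv C)].
Qed.

Lemma cat_paths_cons (g : list V) gs : cat_paths (g :: gs) = g ++ tl (cat_paths gs).
Proof. destruct gs; simpl; auto. rewrite app_nil_r. reflexivity. Qed.

Lemma cat_paths_nonempty (gs : list (list V)) :
  Forall (fun g => g <> []) gs -> gs <> [] -> cat_paths gs <> [].
Proof.
  intros H Hgs. destruct gs as [|g gs]; [congruence|]. rewrite cat_paths_cons.
  destruct g; [exact (False_ind _ (Forall_inv H eq_refl)) | discriminate].
Qed.

Lemma cat_paths_snoc (gs : list (list V)) gf :
  Forall (fun g => g <> []) gs -> gs <> [] -> cat_paths (gs ++ [gf]) = cat_paths gs ++ tl gf.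
Proof.
  induction gs as [|g [|g' gs] IH]; intros H Hgs; [congruence| |].
  - reflexivity.
  - inversion H as [|? ? _ Hr]; subst.
    change ((g :: g' :: gs) ++ [gf]) with (g :: ((g' :: gs) ++ [gf])).
    rewrite !(cat_paths_cons g), IH by (auto; discriminate).
    rewrite <- app_assoc. f_equal.
    destruct (cat_paths (g' :: gs)) eqn:E; [|reflexivity].
    exfalso. exact (cat_paths_nonempty Hr ltac:(discriminate) E).
Qed.

Lemma Ph_cat_paths Om (gs : list (list V)) (c : nat -> V) : gs <> [] ->
  (forall s, s < length gs -> Ph p (c s) (c (S s)) Om (nth s gs [])) ->
  (forall s, 0 < s < length gs -> Om (c s)) ->
  Ph p (c 0) (c (length gs)) Om (cat_paths gs).
Proof.
  revert c. induction gs as [|g [|g' gs] IH]; intros c Hgs Hpiece Hcross; [congruence| |].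
  - apply (Hpiece 0). simpl. lia.
  - rewrite cat_paths_cons. apply Ph_app with (b := c 1).
    + apply (Hpiece 0). simpl. lia.
    + apply (IH (fun s => c (S s))); [discriminate| |].
      * intros s Hs. apply (Hpiece (S s)). simpl in *. lia.
      * intros s Hs. apply (Hcross (S s)). simpl in *. lia.
    + apply Hcross. simpl. lia.
Qed.

(* A path in [Ph(a,b;Om)] can only leave [Om] at its last vertex. *)
Lemma Ph_stops_outside a b Om (g : list V) q mid c gf :
  Ph p a b Om g -> g = (q :: mid ++ [c]) ++ tl gf -> ~ Om c -> hd_error gf = Some c ->
  c = b /\ gf = [c].
Proof.
  intros [_ [[-> _] | [mid0 [-> F]]]] Hg Hc Hgf.
  - destruct mid; discriminate.
  - destruct gf as [|c' t]; [discriminate|]. injection Hgf as ->.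
    injection Hg as _ Hg. rewrite <- app_assoc in Hg. simpl in Hg.
    destruct t as [|v t].
    + apply app_inj_tail in Hg as [_ ->]. auto.
    + exfalso. apply Hc. rewrite Forall_forall in F. apply F.
      rewrite <- (removelast_last mid0 b), Hg, removelast_app by discriminate.
      apply in_or_app. right. left. reflexivity.
Qed.

Lemma Ph_prefix_unique a b Om (g1 g2 t1 t2 : list V) :
  a <> b -> ~ Om b -> Ph p a b Om g1 -> Ph p a b Om g2 ->
  g1 ++ t1 = g2 ++ t2 -> g1 = g2 /\ t1 = t2.
Proof.
  intros Hab Hb H1 H2 E.
  destruct H1 as [_ [[_ ?] | [m1 [-> F1]]]]; [contradiction|].
  destruct H2 as [_ [[_ ?] | [m2 [-> F2]]]]; [contradiction|].
  injection E as E. rewrite <- !app_assoc in E. simpl in E.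
  rewrite Forall_forall in F1, F2.
  destruct (app_inj_pivot _ _ _ _ _ E) as [[[Hin _] | [_ Hin]] | [-> ->]];
    [exact (False_ind _ (Hb (F1 b Hin))) | exact (False_ind _ (Hb (F2 b Hin))) | auto].
Qed.

Lemma cat_paths_inj_Ph (gs1 gs2 : list (list V)) (c : nat -> V) (Om : nat -> V -> Prop) :
  length gs1 = length gs2 ->
  (forall s, s < length gs1 ->
     Ph p (c s) (c (S s)) (Om s) (nth s gs1 []) /\ Ph p (c s) (c (S s)) (Om s) (nth s gs2 []) /\
     c s <> c (S s) /\ ~ Om s (c (S s))) ->
  cat_paths gs1 = cat_paths gs2 -> gs1 = gs2.
Proof.
  revert gs2 c Om. induction gs1 as [|g1 gs1 IH]; intros gs2 c Om Hlen H E;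
    destruct gs2 as [|g2 gs2]; simpl in Hlen; try congruence.
  rewrite !cat_paths_cons in E.
  destruct (H 0 ltac:(simpl; lia)) as [P1 [P2 [Hne Hout]]]. simpl in P1, P2.
  destruct (Ph_prefix_unique Hne Hout P1 P2 E) as [-> Etl]. f_equal.
  apply (IH gs2 (fun s => c (S s)) (fun s => Om (S s))); [lia | |].
  - intros s Hs. apply (H (S s)). simpl. lia.
  - destruct gs1 as [|h1 gs1], gs2 as [|h2 gs2]; simpl in Hlen; try congruence.
    destruct (H 1 ltac:(simpl; lia)) as [Q1 [Q2 _]]. simpl in Q1, Q2.
    destruct (Ph_head Q1) as [u1 ->], (Ph_head Q2) as [u2 ->].
    rewrite !cat_paths_cons in Etl |- *. simpl in Etl |- *. congruence.
Qed.

End AdmissiblePaths.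

Lemma finite_range_step (V : Type) d (p : V -> V -> R) k u v :
  finite_range d p k -> (0 < p u v)%R -> d u v <= k.
Proof.
  intros Hk Huv. destruct (le_lt_dec (d u v) k) as [|Hlt]; auto.
  rewrite (Hk u v Hlt) in Huv. destruct (Rlt_irrefl _ Huv).
Qed.

(* Steps of length at most [k] cannot jump over [B(w)]: a path that starts
   beyond [w] as seen from [e] and avoids [B(w)] stays beyond [w], hence outside [B(e)]. *)
Lemma Ph_outside_ball_beyond (V : Type) adj d (p : V -> V -> R) k
  (Ht : is_tree adj) (Hd : is_graph_dist adj d) (Hk : finite_range d p k) w e c b g :
  between d c w e -> ~ ball d k w c ->
  Ph p c b (fun v => ~ ball d k w v) g -> Ph p c b (fun v => ~ ball d k e v) g.
Proof.
  destruct Ht as [Hsym [_ [_ Hacyc]]]. unfold ball, between. intros Hc Hcw.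
  apply Ph_invariant with (I := fun v => between d v w e /\ ~ ball d k w v); [split; auto| |].
  - intros u v [Hu Huw] Huv Hvw. split; [|exact Hvw].
    destruct (between_split Hd Hsym Hacyc v Hu) as [E|E]; [|exact E].
    pose proof (finite_range_step Hk Huv). unfold between, ball in *.
    rewrite (dist_sym Hd Hsym u w) in E. lia.
  - intros v [Hv Hvw]. unfold between, ball in *.
    rewrite (dist_sym Hd Hsym e v). rewrite (dist_sym Hd Hsym v w) in Hv. lia.
Qed.

Lemma cross_index_unique (V : Type) d k (xs : list V) c i1 i2 :
  cross_index d k xs c i1 -> cross_index d k xs c i2 -> i1 = i2.
Proof.
  intros [j1 [-> [A1 [B1 C1]]]] [j2 [-> [A2 [B2 C2]]]].
  pose proof (C1 j2 A2 B2). pose proof (C2 j1 A1 B1). lia.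
Qed.

Lemma strict_mono_le (i : nat -> nat) l : (forall s, S s < l -> i s < i (S s)) ->
  forall s t, s <= t -> t < l -> i s <= i t.
Proof.
  intros Hinc s t Hst Ht. induction t as [|t IH]; [replace s with 0 by lia; lia|].
  destruct (Nat.eq_dec s (S t)) as [->|]; [lia|].
  pose proof (Hinc t Ht). pose proof (IH ltac:(lia) ltac:(lia)). lia.
Qed.

Lemma prod_Ph_nonempty (V : Type) p d k x (xs cs : list V) is gs :
  prod_Ph p d k x xs cs is gs -> Forall (fun g => g <> []) gs.
Proof.
  intros [Hlen H]. apply Forall_forall. intros g Hg.
  apply (In_nth _ _ []) in Hg as [s [Hs <-]].
  refine (Ph_nonempty (H s _)). lia.
Qed.

Section CrossingSequence.

Variables (V : Type) (adj : V -> V -> Prop) (d : V -> V -> nat) (p : V -> V -> R) (k : nat).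
Variables (x : V) (xs cs : list V) (is : list nat).
Hypothesis HX : Xi_path p d k x xs cs is.

Lemma Xi_path_index_le s : s < length is -> nth s is 0 <= pred (length xs).
Proof.
  destruct HX as [Hl0 [_ [_ [_ [Hil [Hinc _]]]]]]. intros Hs.
  pose proof (@strict_mono_le _ _ Hinc s (pred (length is)) ltac:(lia) ltac:(lia)). lia.
Qed.

Lemma Xi_path_crossing_outside_end s :
  s < length is -> ~ ball d k (nth (pred (length xs)) xs x) (nth s cs x).
Proof.
  intros Hs Hball. pose proof (Xi_path_index_le Hs) as Hle.
  destruct HX as [_ [_ [_ [_ [_ [_ [_ [_ HXs]]]]]]]].
  destruct (HXs s Hs) as [[j [Ei [Hj [_ Hmax]]]] _].
  assert (Hm : pred (length xs) < length xs) by lia.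
  rewrite (nth_indep xs x (nth s cs x) Hm) in Hball.
  pose proof (Hmax _ Hm Hball). lia.
Qed.

Lemma Xi_path_last_in_end_ball : ball d k (nth (pred (length xs)) xs x) (nth (length is) cs x).
Proof.
  destruct HX as [_ [_ [_ [_ [_ [_ [_ [Hcl _]]]]]]]]. rewrite <- last_nth_pred. exact Hcl.
Qed.

Lemma Xi_path_cat_shape gs : prod_Ph p d k x xs cs is gs ->
  exists mid, cat_paths gs = nth 0 cs x :: mid ++ [nth (length is) cs x].
Proof.
  intros [Hlen Hpieces]. pose proof HX as [Hl0 _].
  apply (Ph_distinct_ends (p := p) (Om := fun _ => True)).
  - rewrite <- Hlen. apply (Ph_cat_paths (c := fun s => nth s cs x)).
    + destruct gs; simpl in Hlen; [lia | discriminate].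
    + intros s Hs. assert (Hs' : s < length is) by lia.
      exact (Ph_invariant (I := fun _ => True) I (fun _ _ _ _ _ => I) (fun _ _ => I) (Hpieces s Hs')).
    + auto.
  - intros E. apply (Xi_path_crossing_outside_end Hl0). rewrite E. exact Xi_path_last_in_end_ball.
Qed.

Lemma Xi_path_cat_inj gs1 gs2 :
  prod_Ph p d k x xs cs is gs1 -> prod_Ph p d k x xs cs is gs2 ->
  cat_paths gs1 = cat_paths gs2 -> gs1 = gs2.
Proof.
  intros [Hlen1 H1] [Hlen2 H2].
  apply (cat_paths_inj_Ph (p := p) (c := fun s => nth s cs x)
           (Om := fun s v => ~ ball d k (nth (nth s is 0) xs x) v)); [congruence|].
  destruct HX as [_ [_ [_ [_ [_ [_ [_ [_ HXs]]]]]]]].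
  intros s Hs. rewrite Hlen1 in Hs. destruct (HXs s Hs) as [_ [Hsph [Hnext _]]].
  split; [exact (H1 s Hs)|]. split; [exact (H2 s Hs)|]. split.
  - intros E. unfold sphere, ball in *. rewrite E in Hsph. lia.
  - intros Hout. exact (Hout Hnext).
Qed.

Lemma Xi_path_indices_unique is' : Xi_path p d k x xs cs is' -> is' = is.
Proof.
  intros [_ [_ [Hlen' [_ [_ [_ [_ [_ HXs']]]]]]]].
  destruct HX as [_ [_ [Hlen [_ [_ [_ [_ [_ HXs]]]]]]]].
  assert (El : length is' = length is) by congruence.
  apply nth_ext with (d := 0) (d' := 0); [exact El|]. intros s Hs.
  exact (cross_index_unique (proj1 (HXs' s Hs)) (proj1 (HXs s ltac:(lia)))).
Qed.

Lemma Xi_path_pieces_not_nil gs : prod_Ph p d k x xs cs is gs -> gs <> [].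
Proof. intros [Hlen _] ->. destruct HX as [Hl0 _]. simpl in Hlen. lia. Qed.

Lemma Xi_path_decomp_cat gs : prod_Ph p d k x xs cs is gs ->
  decomp p d k x xs (cat_paths gs) cs is gs [nth (length is) cs x].
Proof.
  intros Hgs. split; [exact HX|]. split; [exact Hgs|].
  split; [split; [discriminate | exact I]|]. split; [reflexivity|].
  rewrite (cat_paths_snoc _ (prod_Ph_nonempty Hgs) (Xi_path_pieces_not_nil Hgs)).
  symmetry. apply app_nil_r.
Qed.

Variable y : V.
Hypothesis Ht : is_tree adj.
Hypothesis Hd : is_graph_dist adj d.
Hypothesis Hk : finite_range d p k.
Hypothesis Hgeo : geodesic adj d x y xs.

Lemma Xi_path_crossing_in_earlier_ball s : s < length is ->
  exists j, j < nth s is 0 /\ ball d k (nth j xs x) (nth s cs x).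
Proof.
  destruct HX as [_ [_ [_ [Hi0 [_ [Hinc [Hc0 [_ HXs]]]]]]]]. intros Hs.
  destruct s as [|s].
  - exists 0. split; [exact Hi0|]. destruct Hgeo as [_ [-> _]]. exact Hc0.
  - exists (nth s is 0). split; [apply Hinc; lia | apply (HXs s); lia].
Qed.

(* [x_{i_s}] separates [c_s] from the end [x_m] of the geodesic, because [c_s] lies in
   a ball [B(x_j)] with [j < i_s] but outside [B(x_{i_s})]. *)
Lemma Xi_path_crossing_beyond s : s < length is ->
  between d (nth s cs x) (nth (nth s is 0) xs x) (nth (pred (length xs)) xs x).
Proof.
  intros Hs. destruct Ht as [Hsym [_ [_ Hacyc]]].
  destruct (Xi_path_crossing_in_earlier_ball Hs) as [j [Hj Hball]].
  pose proof (Xi_path_index_le Hs) as Him.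
  pose proof HX as [_ [_ [_ [_ [_ [_ [_ [_ HXs]]]]]]]].
  destruct (HXs s Hs) as [_ [Hsph _]].
  pose proof (@geodesic_dist _ _ _ Hd _ _ _ j (pred (length xs)) Hgeo ltac:(lia) ltac:(lia)).
  pose proof (@geodesic_dist _ _ _ Hd _ _ _ j (nth s is 0) Hgeo ltac:(lia) ltac:(lia)).
  pose proof (@geodesic_dist _ _ _ Hd _ _ _ (nth s is 0) (pred (length xs)) Hgeo ltac:(lia) ltac:(lia)).
  destruct (between_split Hd Hsym Hacyc (nth s cs x) (u := nth j xs x)
              (w := nth (nth s is 0) xs x) (z := nth (pred (length xs)) xs x))
    as [E|E]; [unfold between; lia | | exact E].
  exfalso. unfold between, ball, sphere in *. lia.
Qed.

Lemma Xi_path_piece_outside_end s g : s < length is ->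
  Ph p (nth s cs x) (nth (S s) cs x) (fun v => ~ ball d k (nth (nth s is 0) xs x) v) g ->
  Ph p (nth s cs x) (nth (S s) cs x) (fun v => ~ ball d k (nth (pred (length xs)) xs x) v) g.
Proof.
  intros Hs. apply (Ph_outside_ball_beyond Ht Hd Hk (Xi_path_crossing_beyond Hs)).
  destruct HX as [_ [_ [_ [_ [_ [_ [_ [_ HXs]]]]]]]]. destruct (HXs s Hs) as [_ [Hsph _]].
  unfold ball, sphere in *. lia.
Qed.

Lemma Xi_path_cat_outside_end gs : prod_Ph p d k x xs cs is gs ->
  Ph p (nth 0 cs x) (nth (length is) cs x)
    (fun v => ~ ball d k (nth (pred (length xs)) xs x) v) (cat_paths gs).
Proof.
  intros Hgs. pose proof Hgs as [Hlen Hpieces]. rewrite <- Hlen.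
  apply (Ph_cat_paths (c := fun s => nth s cs x)); [exact (Xi_path_pieces_not_nil Hgs) | |].
  - intros s Hs. rewrite Hlen in Hs. exact (Xi_path_piece_outside_end Hs (Hpieces s Hs)).
  - intros s Hs. apply Xi_path_crossing_outside_end. lia.
Qed.

End CrossingSequence.


Lemma decomp_final_piece (V : Type) p d k x (xs g cs : list V) is gs gf a b Om :
  decomp p d k x xs g cs is gs gf -> Ph p a b Om g -> ~ Om (nth (length is) cs x) ->
  nth (length is) cs x = b /\ gf = [b].
Proof.
  intros [HX [Hgs [_ [Hhd ->]]]] Hg Hout.
  destruct (Xi_path_cat_shape HX Hgs) as [mid Hmid].
  rewrite (cat_paths_snoc _ (prod_Ph_nonempty Hgs) (Xi_path_pieces_not_nil HX Hgs)), Hmid in Hg.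
  destruct (Ph_stops_outside Hg eq_refl Hout Hhd) as [<- ->]. auto.
Qed.

Lemma decomp_trivial_tail (V : Type) p d k x (xs g cs : list V) is gs c :
  decomp p d k x xs g cs is gs [c] -> g = cat_paths gs.
Proof.
  intros [HX [Hgs [_ [_ ->]]]].
  rewrite (cat_paths_snoc _ (prod_Ph_nonempty Hgs) (Xi_path_pieces_not_nil HX Hgs)).
  apply app_nil_r.
Qed.

Theorem corollary3p21 (V : Type) (adj : V -> V -> Prop) (d : V -> V -> nat)
  (p : V -> V -> R) (k : nat)
  (Htree : is_tree adj) (Hval : bounded_valence adj) (Hd : is_graph_dist adj d)
  (Hp : transition_kernel p) (Hirr : irreducible p) (Hk : finite_range d p k)
  (x y : V) (xs : list V) (Hxy : x <> y) (Hgeo : geodesic adj d x y xs)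
  (a b : V) (Ha : ball d k x a) (Hay : ~ ball d k y a) (Hb : ball d k y b) :
  (* (i) *)
  (forall (g : list V) (cs : list V) (is : list nat) (gs : list (list V)) (gf : list V),
     Ph p a b (fun v => ~ ball d k y v) g ->
     decomp p d k x xs g cs is gs gf ->
     nth (length is) cs x = b /\ gf = [b]) /\
  (* (ii) *)
  (forall (cs : list V) (is : list nat),
     Xi_path p d k x xs cs is ->
     bij_onto (@cat_paths V)
       (prod_Ph p d k x xs cs is)
       (fun g => Ph p (nth 0 cs x) (nth (length is) cs x)
                    (fun v => ~ ball d k (nth (pred (length xs)) xs x) v) g /\
                 exists is' gs' gf', decomp p d k x xs g cs is' gs' gf')).
Proof.
  split.
  - intros g cs is gs gf Hg Hdec. apply (decomp_final_piece Hdec Hg).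
    pose proof (Xi_path_last_in_end_ball (proj1 Hdec)) as Hend.
    destruct Hgeo as [_ [_ [Hlast _]]]. rewrite <- last_nth_pred, Hlast in Hend.
    intros Hout. exact (Hout Hend).
  - intros cs is HX. split; [|split].
    + intros gs Hgs. split; [exact (Xi_path_cat_outside_end HX Htree Hd Hk Hgeo Hgs)|].
      exists is, gs, [nth (length is) cs x]. exact (Xi_path_decomp_cat HX Hgs).
    + exact (Xi_path_cat_inj HX).
    + intros g [Hg [is' [gs [gf Hdec]]]].
      pose proof (Xi_path_indices_unique HX (proj1 Hdec)). subst is'.
      destruct (decomp_final_piece Hdec Hg (fun Hout => Hout (Xi_path_last_in_end_ball HX)))
        as [_ ->].
      exists gs. split; [exact (proj1 (proj2 Hdec)) | symmetry; exact (decomp_trivial_tail Hdec)].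
Qed.
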